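(* Let $k\ge3$, let $G=(V,E)$ be a $k$-uniform hypergraph with connected components $V_1,\dots,V_s$ ($s\ge1$), and let $\mathbf x\in\mathbb C^n$ be an eigenvector of the Laplacian tensor $\mathcal D-\mathcal A$ (respectively, of the signless Laplacian tensor $\mathcal D+\mathcal A$) corresponding to the eigenvalue $0$. Then for every $i\in[s]$ with $\mathbf x(V_i)\neq0$: (a) $\mathbf x(V_i)$ is an eigenvector of the sub-tensor $(\mathcal D-\mathcal A)(V_i)$ (respectively $(\mathcal D+\mathcal A)(V_i)$) corresponding to the eigenvalue $0$; (b) $\mathrm{sup}(\mathbf x(V_i))=V_i$; and (c) there exist $\gamma_i\in\mathbb C\setminus\{0\}$ and nonnegative integers $\alpha_j$ ($j\in V_i$) such that $x_j=\gamma_i\exp\!\big(\tfrac{2\alpha_j\pi}{k}\sqrt{-1}\big)$ for all $j\in V_i$.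
   Context: A $k$-uniform hypergraph $G=(V,E)$ has vertex set $V=[n]$ ($n\ge k$) and a nonempty edge set $E$ of $k$-element subsets of $V$; $E_i=\{e\in E:i\in e\}$, $d_i=|E_i|$. Two distinct vertices are connected if there is a sequence of edges $e_1,\dots,e_m$ with $i\in e_1$, $j\in e_m$, $e_r\cap e_{r+1}\ne\emptyset$. A connected component is a maximal set of pairwise connected vertices; an isolated vertex (degree $0$, a singleton) is also a connected component, so the components partition $V$. The adjacency tensor $\mathcal A$ has $a_{i_1\dots i_k}=\frac1{(k-1)!}$ if $\{i_1,\dots,i_k\}\in E$, else $0$; $\mathcal D$ is diagonal with $d_{i\dots i}=d_i$. Thus $((\mathcal D\pm\mathcal A)\mathbf x^{k-1})_i=d_ix_i^{k-1}\pm\sum_{e\in E_i}\prod_{j\in e\setminus\{i\}}x_j$. $\lambda$ is an eigenvalue of a tensor $\mathcal T$ with eigenvector $\mathbf x\in\mathbb C^n\setminus\{0\}$ if $(\mathcal T\mathbf x^{k-1})_i=\lambda x_i^{k-1}$ for all $i$. For $S=\{j_1,\dots,j_m\}\subseteq[n]$, the sub-tensor $\mathcal T(S)$ is the order-$k$ dimension-$m$ tensor with entries $t_{j_{i_1}\dots j_{i_k}}$, and $\mathbf x(S)$ is the subvector $(x_j)_{j\in S}$. $\mathrm{sup}(\mathbf x)=\{i: x_i\ne0\}$. *)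

(* Complex field: an arbitrary numClosedFieldType C. *)
From HB Require Import structures.
From mathcomp Require Import all_boot all_order all_algebra.
Set Implicit Arguments. Unset Strict Implicit. Unset Printing Implicit Defensive.
Import Order.TTheory GRing.Theory Num.Theory.
Local Open Scope ring_scope.

Section Hyper.
Variables (C : numClosedFieldType) (n k : nat).

(* An order-k, dimension-n tensor: t_{i i_2 ... i_k} = T i [:: i_2; ...; i_k]. *)
Definition tensor := 'I_n -> (k.-1).-tuple 'I_n -> C.

Definition tapply (T : tensor) (x : 'I_n -> C) (i : 'I_n) : C :=
  \sum_(t : (k.-1).-tuple 'I_n) T i t * \prod_(j <- t) x j.

Definition eigenpair (T : tensor) (lam : C) (x : 'I_n -> C) : Prop :=
  (exists i, x i != 0) /\ forall i, tapply T x i = lam * x i ^+ k.-1.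

Variable E : {set {set 'I_n}}.

Definition deg (i : 'I_n) : nat := #|[set e in E | i \in e]|.

Definition adj_tensor : tensor := fun i t =>
  if [set j in i :: t] \in E then ((k.-1)`!)%:R^-1 else 0.

Definition deg_tensor : tensor := fun i t =>
  if all (fun j => j == i) t then (deg i)%:R else 0.

Definition lap_tensor (signless : bool) : tensor := fun i t =>
  if signless then deg_tensor i t + adj_tensor i t
  else deg_tensor i t - adj_tensor i t.

Definition hconnected (i j : 'I_n) : Prop :=
  exists (e0 : {set 'I_n}) (s : seq {set 'I_n}),
    [/\ all (fun e => e \in E) (e0 :: s), i \in e0, j \in last e0 s &
        path (fun a b => a :&: b != set0) e0 s].

Definition pairwise_connected (S : {set 'I_n}) : Prop :=
  forall i j, i \in S -> j \in S -> i != j -> hconnected i j.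

Definition is_component (S : {set 'I_n}) : Prop :=
  [/\ S != set0, pairwise_connected S &
      forall S' : {set 'I_n}, S \subset S' -> pairwise_connected S' -> S' = S].

End Hyper.

(* sub-tensor T(S) and subvector x(S), indexing S by its increasing enumeration *)
Definition subtensor (C : numClosedFieldType) (n k : nat) (S : {set 'I_n})
  (T : tensor C n k) : tensor C #|S| k :=
  fun i t => T (enum_val i) (map_tuple (fun j => enum_val j) t).

Definition subvec (C : numClosedFieldType) (n : nat) (S : {set 'I_n})
  (x : 'I_n -> C) : 'I_#|S| -> C := fun i => x (enum_val i).

Definition sup (C : numClosedFieldType) (m : nat) (x : 'I_m -> C) : {set 'I_m} :=
  [set i | x i != 0].

From HB Require Import structures.
From mathcomp Require Import all_boot all_order all_algebra.
From mathcomp Require Import cyclic separable cyclotomic ring.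
Set Implicit Arguments. Unset Strict Implicit. Unset Printing Implicit Defensive.
Import Order.TTheory GRing.Theory Num.Theory.
Local Open Scope ring_scope.

(* Write sg = 1 for D + A and sg = -1 for D - A.  Unfolding the tensors, the
   eigen-equation for the eigenvalue 0 at a vertex j reads
     d_j x_j^(k-1) + sg * \sum_(e in E, j in e) \prod_(l in e :\ j) x_l = 0.
   Fix a component S on which x does not vanish and let M > 0 be the maximum
   of |x| on S.  At a vertex j of S with |x_j| = M, the d_j edge products have
   modulus at most M^(k-1) and mean -sg x_j^(k-1), of modulus M^(k-1); so
   each of them equals -sg x_j^(k-1), all factors have modulus M, and
   \prod_(l in e) x_l = -sg x_j^k for every edge e through j.  Applying this
   at every vertex of such an edge shows that x_l^k is constant on it.  As S
   is closed under edges and connected, |x| = M and x^k is constant on S.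
   This gives (b); (c) follows because x_l / x_m is then a k-th root of unity,
   and the square of k.-root (-1) is a primitive k-th root of unity; (a)
   holds because the Laplacian entries at a vertex of S vanish on index
   tuples leaving S. *)

Section RootsOfUnity.
Variable C : numClosedFieldType.

(* An algebraically closed field of characteristic 0 has primitive roots of
   unity of every order: 'X^n - 1 is separable, hence has n distinct roots. *)
Lemma prim_root_exists n : (0 < n)%N -> exists z : C, n.-primitive_root z.
Proof.
move=> n_gt0.
pose p : {poly C} := 'X^n - 1; have [r Dp] := closed_field_poly_normal p.
rewrite (monicP _) ?monicXnsubC // scale1r in Dp.
have rn1 : all n.-unity_root r by apply/allP=> z; rewrite -root_prod_XsubC -Dp.
have sz_r : (n < (size r).+1)%N.
  by rewrite -(size_prod_XsubC r id) -Dp size_XnsubC.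
have [|z] := hasP (has_prim_root n_gt0 rn1 _ sz_r); last by exists z.
by rewrite -separable_prod_XsubC -Dp separable_Xn_sub_1 // pnatr_eq0 -lt0n.
Qed.

Lemma sum_unity_powers (z : C) r : z ^+ r = 1 -> z != 1 -> \sum_(j < r) z ^+ j = 0.
Proof.
move=> zr z1; have /esym/eqP := subrX1 z r.
by rewrite zr subrr mulf_eq0 subr_eq0 (negbTE z1) => /eqP.
Qed.

Lemma unit_dist1 (y : C) : `|y| = 1 -> `|1 - y| ^+ 2 = 2 - 2 * 'Re y.
Proof.
move=> ny; have yy : y * y^* = 1 by rewrite -normCK ny expr1n.
rewrite normCK ReE rmorphB rmorph1 mulrCA mulfV ?pnatr_eq0 // mulr1.
transitivity (1 - y - y^* + y * y^*); first ring.
by rewrite yy; ring.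
Qed.

Lemma unit_root_norm (z w : C) r : (0 < r)%N -> z ^+ r = w -> `|w| = 1 -> `|z| = 1.
Proof.
move=> r_gt0 zr nw; apply/eqP.
by rewrite -(pexpr_eq1 r_gt0) ?normr_ge0 // -normrX zr nw.
Qed.

(* Summing the geometric sums of all the r-th roots c * xi^j of c^r: only the
   constant terms survive, as the other powers of xi sum to 0. *)
Lemma sum_geometric_over_roots (c xi : C) r : r.-primitive_root xi ->
  \sum_(j < r) \sum_(a < r) (c * xi ^+ j) ^+ a = \sum_(j < r) 1.
Proof.
move=> xi_prim; have r_gt0 := prim_order_gt0 xi_prim.
rewrite exchange_big (bigD1 (Ordinal r_gt0)) //= [X in _ + X]big1 ?addr0.
  by apply: eq_bigr => j _; rewrite expr0.
move=> a a_neq0; under eq_bigr do rewrite exprMn -exprM mulnC exprM.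
rewrite -mulr_sumr sum_unity_powers ?mulr0 //.
  by rewrite -exprM mulnC exprM (prim_expr_order xi_prim) expr1n.
by rewrite -(expr0 xi) (eq_prim_root_expr xi_prim) mod0n modn_small.
Qed.

(* Otherwise, for every r-th root y of w, S_y = \sum_(a < r) y^a
   satisfies (1 - y) S_y = 1 - w and |1 - w| <= |1 - y|, so |S_y| <= 1; but
   the S_y sum to r over the r roots, which forces S_y = 1, i.e. y = w, for
   all of these distinct roots. *)
Lemma unit_root_larger_Re (w : C) r : `|w| = 1 -> w != 1 -> (1 < r)%N ->
  exists y, y ^+ r = w /\ 'Re w < 'Re y.
Proof.
move=> nw w1 r_gt1; have r_gt0 := ltnW r_gt1.
have [xi xi_prim] := prim_root_exists r_gt0.
have xir : xi ^+ r = 1 := prim_expr_order xi_prim.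
pose y (j : nat) := r.-root w * xi ^+ j.
have yr j : y j ^+ r = w.
  by rewrite exprMn rootCK // -exprM mulnC exprM xir expr1n mulr1.
have ny j : `|y j| = 1 := unit_root_norm r_gt0 (yr j) nw.
have [/existsP [j Rej] | /existsPn Rey] := boolP [exists j : 'I_r, 'Re w < 'Re (y j)].
  by exists (y j).
have leRe (j : 'I_r) : 'Re (y j) <= 'Re w.
  by have := Rey j; rewrite real_ltNge ?Creal_Re // negbK.
pose S j := \sum_(a < r) y j ^+ a.
have mulS j : (1 - y j) * S j = 1 - w.
  by rewrite -opprB mulNr -subrX1 yr opprB.
have w1_gt0 : 0 < `|1 - w| by rewrite normr_gt0 subr_eq0 eq_sym.
have normS (j : 'I_r) : `|S j| <= 1.
  have le1 : `|1 - w| <= `|1 - y j|.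
    rewrite -(ler_pXn2r (isT : (0 < 2)%N)) ?nnegrE ?normr_ge0 //.
    by rewrite !unit_dist1 // lerD2l lerN2 ler_pM2l ?ltr0n.
  have y1_gt0 : 0 < `|1 - y j| by apply: lt_le_trans le1.
  by rewrite -(ler_pM2l y1_gt0) mulr1 -normrM mulS.
have sumS : \sum_(j < r) S j = \sum_(j < r) 1 := sum_geometric_over_roots _ xi_prim.
have S1 (j : 'I_r) : S j = 1 := normC_sum_upper (fun j _ => normS j) sumS isT.
have yw (j : 'I_r) : y j = w.
  by have := mulS j; rewrite S1 mulr1 => /addrI /oppr_inj.
have := yw (Ordinal r_gt1); rewrite -(yw (Ordinal r_gt0)) /y /= => /(mulfI _).
rewrite rootC_eq0 // -normr_eq0 nw oner_eq0 => /(_ isT) /eqP.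
by rewrite (eq_prim_root_expr xi_prim) !modn_small.
Qed.

(* For a real x, k.-root x has the largest real part among all k-th roots of
   x: the library states this for the roots in the upper half-plane, and the
   conjugate of a root of x is again a root of x. *)
Lemma rootC_Re_max_real k (x y : C) : (0 < k)%N -> x \is Num.real ->
  y ^+ k = x -> 'Re y <= 'Re (k.-root x).
Proof.
move=> k_gt0 xR yk; case/orP: (real_leVge (Creal_Im y) (real0 _)) => [Imy_le0 | Imy_ge0].
  rewrite -Re_conj; apply: rootC_Re_max k_gt0 _ _; last by rewrite Im_conj oppr_ge0.
  by rewrite -rmorphXn /= yk conj_Creal.
exact: rootC_Re_max k_gt0 yk Imy_ge0.
Qed.

(* If its
   order m were a proper divisor of k = r * m, then w ^+ m = -1, and an r-th
   root y of w with 'Re w < 'Re y would be a k-th root of -1 with a larger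
   real part than w. *)
Lemma rootN1_sqr_prim k : (0 < k)%N -> k.-primitive_root (k.-root (-1 : C) ^+ 2).
Proof.
move=> k_gt0; set w := k.-root (-1 : C).
have wk : w ^+ k = -1 by rewrite rootCK.
have nw : `|w| = 1 by apply: (unit_root_norm k_gt0 wk); rewrite normrN1.
have N1_neq1 : (-1 : C) != 1 by rewrite lt_eqF // (lt_trans (ltrN10 C) ltr01).
have w_neq1 : w != 1 by apply: contraNneq N1_neq1 => w1; rewrite -wk w1 expr1n.
have w2k : (w ^+ 2) ^+ k = 1 by rewrite -exprM mulnC exprM wk sqrrN expr1n.
have [m m_prim /dvdnP [r def_k]] := prim_order_exists k_gt0 w2k.
have [<- // | m_neq_k] := eqVneq m k; exfalso.
have wm : w ^+ m = -1.
  have /eqP := prim_expr_order m_prim; rewrite -exprM mulnC exprM sqrf_eq1.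
  case/orP=> /eqP // wm1; move: N1_neq1.
  by rewrite -wk def_k mulnC exprM wm1 expr1n eqxx.
have r_gt1 : (1 < r)%N.
  case: r def_k => [|[|r]] def_k //; first by move: k_gt0; rewrite def_k.
  by move: m_neq_k; rewrite def_k mul1n eqxx.
have [y [yr Re_lt]] := unit_root_larger_Re nw w_neq1 r_gt1.
have yk : y ^+ k = -1 by rewrite def_k exprM yr wm.
have := rootC_Re_max_real k_gt0 (rpredN1 _) yk.
by rewrite real_leNgt ?Creal_Re // Re_lt.
Qed.

End RootsOfUnity.

Section Connectivity.
Variables (n : nat) (E : {set {set 'I_n}}).

Lemma hconnected_edge e u v : e \in E -> u \in e -> v \in e -> hconnected E u v.
Proof. by move=> eE ue ve; exists e, [::]; split => //=; rewrite eE. Qed.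

Lemma hconnected_trans u a v :
  hconnected E u a -> hconnected E a v -> hconnected E u v.
Proof.
move=> [e0 [s [Es ue0 a_last ps]]] [f0 [t [Et af0 v_last pt]]].
exists e0, (s ++ f0 :: t); split => //.
- by rewrite -cat_cons all_cat Es Et.
- by rewrite last_cat.
- by rewrite cat_path ps /= pt andbT; apply/set0Pn; exists a; rewrite inE a_last af0.
Qed.

Lemma hconnected_sym u v : hconnected E u v -> hconnected E v u.
Proof.
move=> [e0 [s [Es ue0 v_last ps]]].
exists (last e0 s), (rev (belast e0 s)); split => //.
- by rewrite -rev_rcons -lastI all_rev.
- by case: s {Es v_last ps} => [|a s] //=; rewrite rev_cons last_rcons.
- by rewrite rev_path; apply: sub_path ps => a b /=; rewrite setIC.
Qed.

(* A component contains every edge that meets it: otherwise adding the edge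
   would give a larger pairwise connected set. *)
Lemma component_edge_closed S e a :
  is_component E S -> e \in E -> a \in e -> a \in S -> e \subset S.
Proof.
move=> [_ S_conn S_max] eE ae aS.
suff <- : S :|: e = S by apply: subsetUr.
apply: S_max; first exact: subsetUl.
have to_a u : u \in S -> hconnected E u a.
  move=> uS; have [-> | ua] := eqVneq u a; first exact: (hconnected_edge eE ae ae).
  exact: S_conn.
move=> u v; rewrite !inE => /orP [uS | ue] /orP [vS | ve] uv.
- exact: S_conn.
- exact: hconnected_trans (to_a u uS) (hconnected_edge eE ae ve).
- exact: hconnected_trans (hconnected_edge eE ue ae) (hconnected_sym (to_a v vS)).
- exact: hconnected_edge eE ue ve.
Qed.

Lemma hconnected_ind (Q : 'I_n -> Prop) i j :
  (forall a e, Q a -> e \in E -> a \in e -> forall l, l \in e -> Q l) ->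
  Q i -> hconnected E i j -> Q j.
Proof.
move=> spread Qi [e0 [s [Es ie0 j_last ps]]].
elim: s e0 i Qi Es ie0 j_last ps => [|f s IH] e0 i Qi /=.
  by rewrite andbT => e0E ie0 je0 _; exact: spread Qi e0E ie0 j je0.
move=> /andP [e0E Es] ie0 j_last /andP [/set0Pn [a]]; rewrite inE => /andP [ae0 af] ps.
by apply: (IH f a) => //; exact: spread Qi e0E ie0 a ae0.
Qed.

End Connectivity.

Section TensorEvaluation.
Variables (C : numClosedFieldType) (n k : nat).
Hypothesis k_gt0 : (0 < k)%N.

Lemma tuple_spans_edge (e : {set 'I_n}) j (t : (k.-1).-tuple 'I_n) :
  j \in e -> #|e| = k -> ([set l in j :: t] == e) = all (mem (e :\ j)) t && uniq t.
Proof.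
move=> je ek; apply/idP/idP => [/eqP Et | /andP [/allP te t_uniq]].
  have : uniq (j :: t) by apply/card_uniqP; rewrite -cardsE Et ek /= size_tuple prednK.
  rewrite cons_uniq => /andP [jt ->]; rewrite andbT.
  apply/allP => l lt; rewrite !inE -Et inE in_cons lt orbT andbT.
  by apply: contraNneq jt => <-.
have jt : j \notin t by apply/negP => /te; rewrite !inE eqxx.
rewrite eqEcard; apply/andP; split.
  apply/subsetP => l; rewrite inE in_cons => /orP [/eqP -> // | /te].
  by rewrite !inE => /andP [].
by rewrite cardsE (card_uniqP _) ?cons_uniq ?jt // ek /= size_tuple prednK.
Qed.

Lemma tuple_edge_prod (e : {set 'I_n}) j (t : (k.-1).-tuple 'I_n) (x : 'I_n -> C) :
  j \in e -> #|e| = k -> [set l in j :: t] == e ->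
  \prod_(l <- t) x l = \prod_(l in e :\ j) x l.
Proof.
move=> je ek Et; have /andP [/allP te t_uniq] : all (mem (e :\ j)) t && uniq t.
  by rewrite -tuple_spans_edge.
rewrite -big_enum; apply: perm_big; apply: uniq_perm => //; first exact: enum_uniq.
move=> l; rewrite mem_enum; apply/idP/idP; first exact: te.
by rewrite !inE -(eqP Et) inE in_cons => /andP [/negbTE ->].
Qed.

Lemma card_tuples_spanning_edge (e : {set 'I_n}) j : j \in e -> #|e| = k ->
  #|[pred t : (k.-1).-tuple 'I_n | [set l in j :: t] == e]| = (k.-1)`!.
Proof.
move=> je ek.
rewrite (eq_card (B := [set t : (k.-1).-tuple 'I_n | all (mem (e :\ j)) t & uniq t])).
  rewrite card_uniq_tuples.
  have -> : #|mem (e :\ j)| = k.-1 by have := cardsD1 j e; rewrite je ek add1n => ->.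
  by have := ffact_fact (leqnn k.-1); rewrite subnn fact0 muln1.
by move=> t; rewrite !inE tuple_spans_edge.
Qed.

Variable E : {set {set 'I_n}}.
Hypothesis E_uniform : forall e, e \in E -> #|e| = k.

Definition edge_sum (x : 'I_n -> C) (j : 'I_n) : C :=
  \sum_(e in [set e in E | j \in e]) \prod_(l in e :\ j) x l.

Lemma tapply_deg x j : tapply (@deg_tensor C n k E) x j = (deg E j)%:R * x j ^+ k.-1.
Proof.
rewrite /tapply (bigD1 (nseq_tuple k.-1 j)) //= [X in _ + X]big1 ?addr0 /deg_tensor /=.
  have -> : all (fun l => l == j) (nseq k.-1 j) by apply: all_pred1_nseq.
  by rewrite big_nseq iter_mulr_1.
move=> t t_neq; rewrite /deg_tensor; case: ifP => [t_j | _]; last by rewrite mul0r.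
by case/eqP: t_neq; apply/val_inj; have /all_pred1P := t_j; rewrite size_tuple.
Qed.

(* Grouping index tuples by the edge they span, each edge product is counted
   (k-1)! times, which cancels the normalization of the adjacency tensor. *)
Lemma tapply_adj x j : tapply (@adj_tensor C n k E) x j = edge_sum x j.
Proof.
rewrite /tapply /edge_sum; pose c : C := ((k.-1)`!)%:R^-1.
transitivity (\sum_(t : (k.-1).-tuple 'I_n | [set l in j :: t] \in [set e in E | j \in e])
   c * \prod_(l <- t) x l).
  rewrite [RHS]big_mkcond; apply: eq_bigr => t _; rewrite /adj_tensor !inE eqxx /= andbT.
  by case: ifP; rewrite ?mul0r.
rewrite (partition_big (fun t : (k.-1).-tuple 'I_n => [set l in j :: t])
   (mem [set e in E | j \in e])) //=.
apply: eq_bigr => e; rewrite inE => /andP [eE je]; have ek := E_uniform eE.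
rewrite (eq_bigl (fun t : (k.-1).-tuple 'I_n => [set l in j :: t] == e)); last first.
  by move=> t; apply/andP/idP => [[] // | /eqP ->]; rewrite inE eE je.
rewrite (eq_bigr (fun _ => c * \prod_(l in e :\ j) x l)); last first.
  by move=> t Et; rewrite (tuple_edge_prod x je ek Et).
rewrite sumr_const card_tuples_spanning_edge // -mulr_natl mulrA /c mulfV ?mul1r //.
by rewrite pnatr_eq0 -lt0n fact_gt0.
Qed.

Definition lap_sign (signless : bool) : C := if signless then 1 else -1.

Lemma tapply_lap signless x j :
  tapply (@lap_tensor C n k E signless) x j =
  (deg E j)%:R * x j ^+ k.-1 + lap_sign signless * edge_sum x j.
Proof.
rewrite -tapply_deg -tapply_adj /tapply /lap_tensor /lap_sign.
case: signless; rewrite ?mul1r ?mulN1r -?big_split -?sumrB; apply: eq_bigr => t _.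
  by rewrite mulrDl.
by rewrite mulrBl.
Qed.

End TensorEvaluation.

(* Evaluating a sub-tensor on a sub-vector amounts to evaluating the tensor
   on the vector, provided the rows indexed by S vanish on the tuples that
   leave S: the tuples over S are exactly the images of the tuples over 'I_#|S|. *)
Lemma tapply_subtensor (C : numClosedFieldType) n k (S : {set 'I_n})
  (T : tensor C n k) x (i : 'I_#|S|) :
  (forall t : (k.-1).-tuple 'I_n, ~~ all (mem S) t -> T (enum_val i) t = 0) ->
  tapply (@subtensor C n k S T) (@subvec C n S x) i = tapply T x (enum_val i).
Proof.
move=> T_out; have iS : enum_val i \in S := enum_valP i.
rewrite /tapply [RHS](bigID (fun t : (k.-1).-tuple 'I_n => all (mem S) t)) /=.
rewrite [X in _ = _ + X]big1 ?addr0 => [|t /T_out ->]; last by rewrite mul0r.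
rewrite (reindex_onto (fun t : (k.-1).-tuple 'I_#|S| => map_tuple (fun j => enum_val j) t)
   (fun t => map_tuple (enum_rank_in iS) t)) /=; last first.
  move=> t /allP tS; apply/val_inj => /=; rewrite -map_comp -[RHS]map_id.
  by apply/eq_in_map => l /tS lS /=; rewrite enum_rankK_in.
apply: eq_big => [t | t _]; last by rewrite /subtensor /subvec big_map.
rewrite all_map; apply/esym/andP; split; first by apply/allP => l _ /=; exact: enum_valP.
apply/eqP/val_inj => /=; rewrite -map_comp -[RHS]map_id.
by apply: eq_map => l /=; rewrite enum_valK_in.
Qed.

Lemma lap_tensor_local (C : numClosedFieldType) n k (E : {set {set 'I_n}}) S i
  signless (t : (k.-1).-tuple 'I_n) :
  is_component E S -> i \in S -> ~~ all (mem S) t -> @lap_tensor C n k E signless i t = 0.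
Proof.
move=> S_comp iS t_out; rewrite /lap_tensor /deg_tensor /adj_tensor.
have -> : all (fun l => l == i) t = false.
  by apply: contraNF t_out => /allP t_i; apply/allP => l /t_i /eqP ->.
have -> : ([set l in i :: t] \in E) = false.
  apply: contraNF t_out => eE; have := component_edge_closed S_comp eE _ iS.
  rewrite inE mem_head => /(_ isT) /subsetP e_S.
  by apply/allP => l lt; apply: e_S; rewrite inE in_cons lt orbT.
by case: signless; rewrite ?addr0 ?subr0.
Qed.

Lemma bounded_sum_eq (C : numClosedFieldType) (I : finType) (A : {set I}) (p : I -> C) u :
  (forall e, e \in A -> `|p e| <= `|u|) -> \sum_(e in A) p e = #|A|%:R * u ->
  forall e, e \in A -> p e = u.
Proof.
move=> p_le sum_p; have [u0 e eA | u_neq0] := eqVneq u 0.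
  by have := p_le e eA; rewrite u0 normr0 normr_le0 => /eqP.
have p_div : \sum_(e in A) p e / u = \sum_(e in A) 1.
  by rewrite -mulr_suml sum_p mulfK // sumr_const.
move=> e eA; apply: (divIf u_neq0); rewrite divff //.
apply: (normC_sum_upper _ p_div eA) => a aA.
by rewrite normrM normfV ler_pdivrMr ?normr_gt0 // mul1r p_le.
Qed.

Lemma bounded_prod_eq (C : numClosedFieldType) (I : finType) (A : {set I}) (p : I -> C) M :
  0 < M -> (forall l, l \in A -> `|p l| <= M) -> `|\prod_(l in A) p l| = M ^+ #|A| ->
  forall l, l \in A -> `|p l| = M.
Proof.
move=> M_gt0 p_le; rewrite normr_prod -prodr_const => prod_eq l lA.
apply/eqP; rewrite eq_le p_le //=; apply: contra_eqT prod_eq.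
rewrite -real_ltNge ?normr_real ?gtr0_real // => p_lt.
rewrite (bigD1 l) //= [X in _ != X](bigD1 l) //= lt_eqF //.
have prod_le : \prod_(a in A | a != l) `|p a| <= \prod_(a in A | a != l) M.
  by apply: ler_prod => a /andP [aA _]; rewrite normr_ge0 p_le.
apply: le_lt_trans (ler_wpM2l (normr_ge0 _) prod_le) _.
by rewrite ltr_pM2r // prodr_gt0.
Qed.

Lemma max_norm_exists (C : numClosedFieldType) (T : eqType) (f : T -> C) (s : seq T) :
  s != [::] -> exists2 m, m \in s & forall l, l \in s -> `|f l| <= `|f m|.
Proof.
elim: s => [// | a [|b s] IH] _.
  by exists a; rewrite ?mem_head // => l; rewrite inE => /eqP ->.
have [m ms m_max] := IH isT.
case/orP: (real_leVge (normr_real (f a)) (normr_real (f m))) => [am | ma].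
  by exists m => [|l]; rewrite inE ?ms ?orbT // => /orP [/eqP -> // | /m_max].
exists a => [|l]; rewrite ?mem_head // inE => /orP [/eqP -> // | /m_max lm].
exact: le_trans lm ma.
Qed.

Section MaxModulus.
Variables (C : numClosedFieldType) (n k : nat) (E : {set {set 'I_n}}).
Variables (signless : bool) (x : 'I_n -> C).
Hypotheses (k_gt0 : (0 < k)%N) (E_uniform : forall e, e \in E -> #|e| = k).
Hypothesis x_eig : forall i, tapply (@lap_tensor C n k E signless) x i = 0.
Variables (S : {set 'I_n}) (M : C).
Hypotheses (S_comp : is_component E S) (M_gt0 : 0 < M).
Hypothesis x_le_M : forall l, l \in S -> `|x l| <= M.

Let edge_in_S e j : e \in E -> j \in e -> j \in S -> forall l, l \in e -> l \in S.
Proof. by move=> eE je jS; apply/subsetP; exact: component_edge_closed S_comp eE je jS. Qed.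

Lemma max_modulus_edge j e : j \in S -> `|x j| = M -> e \in E -> j \in e ->
  (forall l, l \in e -> `|x l| = M) /\
  \prod_(l in e) x l = - lap_sign C signless * x j ^+ k.
Proof.
move=> jS xj eE je; set sg := lap_sign C signless; set u := - sg * x j ^+ k.-1.
have sg2 : sg * sg = 1 by rewrite /sg /lap_sign; case: signless; rewrite ?mulr1 ?mulrNN ?mulr1.
have norm_u : `|u| = M ^+ k.-1.
  by rewrite /u normrM normrN normrX xj /sg /lap_sign; case: signless; rewrite ?normr1 ?normrN1 mul1r.
have card_ej e' : e' \in E -> j \in e' -> #|e' :\ j| = k.-1.
  by move=> e'E je'; have := cardsD1 j e'; rewrite je' (E_uniform e'E) add1n => ->.
have sum_eq : edge_sum E x j = (deg E j)%:R * u.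
  have := x_eig j; rewrite tapply_lap // -/sg => /(canRL (addKr _)) sg_sum.
  transitivity (sg * (sg * edge_sum E x j)); first by rewrite mulrA sg2 mul1r.
  by rewrite sg_sum /u; ring.
have prod_le e' : e' \in [set e in E | j \in e] -> `|\prod_(l in e' :\ j) x l| <= `|u|.
  rewrite inE => /andP [e'E je']; rewrite norm_u normr_prod -(card_ej e' e'E je') -prodr_const.
  apply: ler_prod => l; rewrite !inE normr_ge0 => /andP [_ le']; exact: x_le_M (edge_in_S e'E je' jS le').
have prod_e : \prod_(l in e :\ j) x l = u.
  by apply: (bounded_sum_eq prod_le sum_eq); rewrite inE eE je.
have xl_M : forall l, l \in e :\ j -> `|x l| = M.
  apply: bounded_prod_eq => // [l | ]; last by rewrite prod_e norm_u card_ej.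
  by rewrite !inE => /andP [_ le]; exact: x_le_M (edge_in_S eE je jS le).
split=> [l le | ]; first by have [-> // | lj] := eqVneq l j; apply: xl_M; rewrite !inE lj.
rewrite (bigD1 j) //= (eq_bigl (mem (e :\ j))) => [|l]; last by rewrite !inE andbC.
by rewrite prod_e /u -{2}(prednK k_gt0) exprS; ring.
Qed.

(* Applying max_modulus_edge at both ends: x^k is constant on such an edge. *)
Lemma max_modulus_spread j e l : j \in S -> `|x j| = M -> e \in E -> j \in e ->
  l \in e -> [/\ l \in S, `|x l| = M & x l ^+ k = x j ^+ k].
Proof.
move=> jS xj eE je le; have [e_M prod_j] := max_modulus_edge jS xj eE je.
have lS := edge_in_S eE je jS le; have [_ prod_l] := max_modulus_edge lS (e_M l le) eE le.
split=> //; first exact: e_M.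
have sg_neq0 : - lap_sign C signless != 0.
  by rewrite oppr_eq0 /lap_sign; case: signless; rewrite ?oppr_eq0 oner_eq0.
by apply: (mulfI sg_neq0); rewrite -prod_l -prod_j.
Qed.

Lemma max_modulus_component m : m \in S -> `|x m| = M ->
  forall l, l \in S -> `|x l| = M /\ x l ^+ k = x m ^+ k.
Proof.
move=> mS xm l lS; pose Q a := [/\ a \in S, `|x a| = M & x a ^+ k = x m ^+ k].
suff [] : Q l by [].
have [-> | lm] := eqVneq l m; first by split.
case: S_comp => _ S_conn _; apply: (hconnected_ind _ _ (S_conn m l mS lS _)).
- move=> a e [aS xa xak] eE ae b be; have [bS xb xbk] := max_modulus_spread aS xa eE ae be.
  by split=> //; rewrite xbk.
- by split.
- by rewrite eq_sym.
Qed.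

End MaxModulus.

Unset Implicit Arguments.

Theorem lemma4p1 (C : numClosedFieldType) (n k : nat) (E : {set {set 'I_n}})
  (hk : (3 <= k)%N) (hkn : (k <= n)%N) (hE0 : E != set0)
  (hEk : forall e, e \in E -> #|e| = k)
  (signless : bool) (x : 'I_n -> C)
  (hx : eigenpair (@lap_tensor C n k E signless) 0 x) :
  forall S : {set 'I_n}, is_component E S -> (exists j, @subvec C n S x j != 0) ->
    [/\ eigenpair (@subtensor C n k S (@lap_tensor C n k E signless)) 0 (@subvec C n S x),
        sup (@subvec C n S x) = [set: 'I_#|S|] &
        exists2 gamma : C, gamma != 0 &
          exists alpha : 'I_n -> nat, forall j, j \in S ->
            x j = gamma * (k.-root (-1)) ^+ (2 * alpha j)].
Proof.
move=> S S_comp [j0 xj0]; have k_gt0 : (0 < k)%N by apply: leq_trans hk.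
have x_eig i : tapply (@lap_tensor C n k E signless) x i = 0 by rewrite hx.2 mul0r.
have [m mS m_max] : exists2 m, m \in S & forall l, l \in S -> `|x l| <= `|x m|.
  have S_nil : enum S != [::] by have := enum_valP j0; rewrite -mem_enum; case: (enum S).
  have [m] := max_norm_exists x S_nil; rewrite mem_enum => mS m_max.
  by exists m => // l lS; apply: m_max; rewrite mem_enum.
have M_gt0 : 0 < `|x m| by apply: lt_le_trans (m_max _ (enum_valP j0)); rewrite normr_gt0.
have x_comp := max_modulus_component k_gt0 hEk x_eig S_comp M_gt0 m_max mS (erefl _).
have xm_neq0 : x m != 0 by rewrite -normr_eq0 gt_eqF.
split.
- split=> [|i]; first by exists j0.
  by rewrite tapply_subtensor ?x_eig ?mul0r // => t; exact: lap_tensor_local S_comp (enum_valP i).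
- by apply/setP => i; rewrite !inE /subvec -normr_eq0 (x_comp _ (enum_valP i)).1 gt_eqF.
- exists (x m) => //; pose w := k.-root (-1 : C).
  exists (fun j => if [pick a : 'I_k | x j == x m * w ^+ (2 * a)] is Some a then val a else 0%N).
  move=> j jS; case: pickP => [a /eqP // | no_a]; exfalso.
  have ratio_k : (x j / x m) ^+ k = 1.
    by rewrite exprMn exprVn (x_comp j jS).2 mulfV // expf_neq0.
  have [a def_ratio] := prim_rootP (rootN1_sqr_prim C k_gt0) ratio_k.
  by have := no_a a; rewrite exprM -def_ratio mulrC divfK // eqxx.
Qed.
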